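(* For any $(2^{nR_1},2^{nR_2},n)$ code for the state-dependent discrete memoryless MAC with generalized feedback, with arbitrary state estimators $\hat S_k^n=\psi_k^n(X_k^n,Z_k^n)$, the average distortion of estimator $k\in\{1,2\}$ satisfies $$d_k^{(n)}=\mathbb E\Big[\frac1n\sum_{i=1}^nd_k(S_{ki},\hat S_{ki})\Big]\ \ge\ \frac1n\sum_{i=1}^n\mathbb E[c_k(X_{1i},X_{2i})],$$ where the expectation on the right is with respect to the distribution of $(X_{1i},X_{2i})$ induced by uniformly distributed independent messages, the states and the channel.
   Context: Model: finite alphabets $\mathcal X_k,\mathcal Z_k,\mathcal Y$, state alphabet $\mathcal S=\mathcal S_1\times\mathcal S_2$, reconstruction alphabets $\hat{\mathcal S}_k$; states $S_i=(S_{1i},S_{2i})$ i.i.d. $\sim P_S$, independent of the messages; memoryless channel $P_{YZ_1Z_2|X_1X_2S}$; encoders $x_{ki}=\phi_{ki}(w_k,z_k^{i-1})$; bounded distortion functions $d_k:\mathcal S_k\times\hat{\mathcal S}_k\to[0,\infty)$. Idealized cost: $$c_k(x_1,x_2)=\sum_{z_1,z_2}\min_{\hat s\in\hat{\mathcal S}_k}\sum_{s=(s_1,s_2)\in\mathcal S}P_S(s)P_{Z_1Z_2|X_1X_2S}(z_1,z_2|x_1,x_2,s)\,d_k(s_k,\hat s),$$ i.e. the minimum expected distortion in estimating $S_k$ from $(X_1,X_2,Z_1,Z_2)$ given $X_1=x_1,X_2=x_2$, when $S\sim P_S$ is independent of the inputs. *)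

From HB Require Import structures.
From mathcomp Require Import all_boot all_order all_algebra.
Set Implicit Arguments. Unset Strict Implicit. Unset Printing Implicit Defensive.
Import Order.TTheory GRing.Theory Num.Theory.
Local Open Scope ring_scope.

(* Minimum of F over a finite type T (0 if T is empty, irrelevant case). *)
Definition fmin (R : realDomainType) (T : finType) (F : T -> R) : R :=
  match enum T with
  | [::] => 0
  | t :: _ => \big[Order.min/F t]_(s : T) F s
  end.

(* z^{i-1} : first i letters (indices 0..i-1) of a length-n sequence. *)
Definition prefix (T : Type) (n : nat) (i : 'I_n) (z : {ffun 'I_n -> T})
  : {ffun 'I_i -> T} :=
  [ffun j : 'I_i => z (widen_ord (ltnW (ltn_ord i)) j)].

(* Encoder k of an n-letter code with M messages: x_{ki} = phi_{ki}(w, z^{i-1}). *)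
Definition encoder (n M : nat) (Z X : Type) :=
  forall i : 'I_n, 'I_M -> {ffun 'I_i -> Z} -> X.

Definition inputs (n M : nat) (Z X : Type) (enc : encoder n M Z X)
  (w : 'I_M) (z : {ffun 'I_n -> Z}) : {ffun 'I_n -> X} :=
  [ffun i => enc i w (prefix i z)].

Section Model.
Variables (R : realFieldType) (X1 X2 Z1 Z2 Y S1 S2 : finType) (n M1 M2 : nat).
Variable PS : S1 * S2 -> R.
(* channel P_{Y Z1 Z2 | X1 X2 S}, output triple encoded as (y, z1, z2) *)
Variable W : X1 -> X2 -> S1 * S2 -> Y * Z1 * Z2 -> R.
Variables (enc1 : encoder n M1 Z1 X1) (enc2 : encoder n M2 Z2 X2).

Definition z1seq (o : {ffun 'I_n -> Y * Z1 * Z2}) : {ffun 'I_n -> Z1} :=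
  [ffun i => (o i).1.2].
Definition z2seq (o : {ffun 'I_n -> Y * Z1 * Z2}) : {ffun 'I_n -> Z2} :=
  [ffun i => (o i).2].
Definition x1seq w1 o := inputs enc1 w1 (z1seq o).
Definition x2seq w2 o := inputs enc2 w2 (z2seq o).

(* Joint probability of (W1, W2, S^n, (Y,Z1,Z2)^n) under uniform independent
   messages, i.i.d. states and the memoryless channel used causally. *)
Definition joint (w1 : 'I_M1) (w2 : 'I_M2) (s : {ffun 'I_n -> S1 * S2})
  (o : {ffun 'I_n -> Y * Z1 * Z2}) : R :=
  (M1 * M2)%:R^-1 *
  \prod_(i < n) (PS (s i) * W (x1seq w1 o i) (x2seq w2 o i) (s i) (o i)).

Definition expect
  (f : 'I_M1 -> 'I_M2 -> {ffun 'I_n -> S1 * S2} -> {ffun 'I_n -> Y * Z1 * Z2} -> R)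
  : R :=
  \sum_(w1 : 'I_M1) \sum_(w2 : 'I_M2) \sum_(s : {ffun 'I_n -> S1 * S2})
   \sum_(o : {ffun 'I_n -> Y * Z1 * Z2}) joint w1 w2 s o * f w1 w2 s o.
End Model.

Definition chZ (R : realFieldType) (X1 X2 Z1 Z2 Y S1 S2 : finType)
  (W : X1 -> X2 -> S1 * S2 -> Y * Z1 * Z2 -> R)
  (x1 : X1) (x2 : X2) (s : S1 * S2) (z1 : Z1) (z2 : Z2) : R :=
  \sum_(y : Y) W x1 x2 s (y, z1, z2).

Definition cost1 (R : realFieldType) (X1 X2 Z1 Z2 Y S1 S2 Sh : finType)
  (PS : S1 * S2 -> R) (W : X1 -> X2 -> S1 * S2 -> Y * Z1 * Z2 -> R)
  (d : S1 -> Sh -> R) (x1 : X1) (x2 : X2) : R :=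
  \sum_(z1 : Z1) \sum_(z2 : Z2)
    fmin (fun sh : Sh => \sum_(s : S1 * S2)
            PS s * chZ W x1 x2 s z1 z2 * d s.1 sh).

Definition cost2 (R : realFieldType) (X1 X2 Z1 Z2 Y S1 S2 Sh : finType)
  (PS : S1 * S2 -> R) (W : X1 -> X2 -> S1 * S2 -> Y * Z1 * Z2 -> R)
  (d : S2 -> Sh -> R) (x1 : X1) (x2 : X2) : R :=
  \sum_(z1 : Z1) \sum_(z2 : Z2)
    fmin (fun sh : Sh => \sum_(s : S1 * S2)
            PS s * chZ W x1 x2 s z1 z2 * d s.2 sh).

From HB Require Import structures.
From mathcomp Require Import all_boot all_order all_algebra.
From mathcomp Require Import zify ring.
Set Implicit Arguments. Unset Strict Implicit. Unset Printing Implicit Defensive.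
Import Order.TTheory GRing.Theory Num.Theory.
Local Open Scope ring_scope.

(* Fix the messages (w1, w2) and a time i.  Summing out the state sequence,
   the joint law of the outputs o = (y, z1, z2)^n is a product of causal
   kernels K_j(o) (K_j depends on o_{<=j} and sums to 1 over o_j).  Two
   facts about such products drive the proof:
   - [freeze_future]: against a function of o_{<m}, the kernels at times
     j >= m may be replaced by point masses (the future marginalizes out);
   - the kernels K_j, j <> i, see o_i only through (z1_i, z2_i), and the
     future is independent of S_i given the past and o_i.
   Hence the distortion at time i, for any estimator seeing the messages and
   both feedback sequences, is at least the sum over (z1_i, z2_i) of the
   minimal conditional distortion [loc_cost] ([distortion_lower_bound]); after
   freezing the future this equals the expected idealized cost at time i
   ([lower_bound_is_cost]).  Averaging over messages and times gives
   [mainTheorem5]; c_1 and c_2 are both instances of the generic [cost]. *)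

Lemma fmin_le (R : realDomainType) (T : finType) (F : T -> R) x : fmin F <= F x.
Proof.
rewrite /fmin; have : x \in enum T by rewrite mem_enum.
by case: (enum T) => [//|t s _]; exact: bigmin_le.
Qed.

Section CoordinateUpdate.
Variables (T : finType) (n : nat).
Local Notation FT := {ffun 'I_n -> T}.
Implicit Types (o : FT) (j k : 'I_n) (t : T).

Definition upd o j t : FT := [ffun k => if k == j then t else o k].

Lemma upd_same o j t : upd o j t j = t.
Proof. by rewrite ffunE eqxx. Qed.

Lemma upd_other o j t k : k != j -> upd o j t k = o k.
Proof. by rewrite ffunE => /negPf ->. Qed.

Lemma upd_upd o j t t' : upd (upd o j t) j t' = upd o j t'.
Proof. by apply/ffunP=> k; rewrite !ffunE; case: eqP. Qed.

Lemma upd_id o j : upd o j (o j) = o.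
Proof. by apply/ffunP => k; rewrite ffunE; case: eqP => // ->. Qed.

Lemma upd_comm o j k t t' : k != j -> upd (upd o j t) k t' = upd (upd o k t') j t.
Proof.
move=> kj; apply/ffunP => l; rewrite !ffunE.
by case: (eqVneq l k) => [->|//]; rewrite (negPf kj).
Qed.

Lemma upd_below o m j t : (m <= j)%N -> forall k, (k < m)%N -> upd o j t k = o k.
Proof.
move=> mj k km; rewrite upd_other // -val_eqE /= neq_ltn.
by rewrite (leq_trans km mj).
Qed.

Definition determined_by (U : Type) (H : FT -> U) (m : nat) :=
  forall o o', (forall k, (k < m)%N -> o k = o' k) -> H o = H o'.

Variable R : comPzRingType.

Definition is_kernel_at (K : FT -> R) j :=
  forall o, \sum_t K (upd o j t) = 1.

Lemma sum_by_coord (F : FT -> R) j t0 :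
  \sum_(o : FT) F o = \sum_(o : FT) (o j == t0)%:R * \sum_t F (upd o j t).
Proof.
under [RHS]eq_bigr do rewrite mulr_sumr.
rewrite exchange_big /= (partition_big (fun o => o j) xpredT) //=.
apply: eq_bigr => t _.
have -> : \sum_(o : FT) (o j == t0)%:R * F (upd o j t) = \sum_(o : FT | o j == t0) F (upd o j t).
  by rewrite [RHS]big_mkcond; apply: eq_bigr => o _; rewrite mulr_natl mulrb.
rewrite (reindex_onto (fun o => upd o j t) (fun o => upd o j t0)) /=.
  apply: eq_bigl => o; rewrite upd_same eqxx upd_upd.
  by apply/eqP/eqP => [<-|<-]; rewrite ?upd_same ?upd_id.
by move=> o /eqP <-; rewrite upd_upd upd_id.
Qed.

Lemma sum_kernel_at (G K : FT -> R) j t0 :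
  (forall o t, G (upd o j t) = G o) -> is_kernel_at K j ->
  \sum_(o : FT) G o * K o = \sum_(o : FT) G o * (o j == t0)%:R.
Proof.
move=> HG HK; rewrite (sum_by_coord _ j t0); apply: eq_bigr => o _.
under eq_bigr do rewrite HG.
by rewrite -mulr_sumr HK mulr1 mulrC.
Qed.

Lemma prod_from_split m (mn : (m < n)%N) (F : 'I_n -> R) :
  \prod_(j : 'I_n | (m <= j)%N) F j = F (Ordinal mn) * \prod_(j : 'I_n | (m < j)%N) F j.
Proof.
rewrite (bigD1 (Ordinal mn)) //=; congr (_ * _); apply: eq_bigl => j.
by rewrite -val_eqE /= [(m < j)%N]ltn_neqAle andbC eq_sym.
Qed.

(* This is the chain rule, peeled off one time step at a time. *)
Lemma freeze_future m0 (K : 'I_n -> FT -> R) t0 :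
  (forall j, (m0 <= j)%N -> is_kernel_at (K j) j) ->
  (forall j, (m0 <= j)%N -> determined_by (K j) j.+1) ->
  forall H, determined_by H m0 ->
  \sum_(o : FT) H o * \prod_(j : 'I_n | (m0 <= j)%N) K j o =
  \sum_(o : FT) H o * \prod_(j : 'I_n | (m0 <= j)%N) (o j == t0)%:R.
Proof.
move=> hK hD.
suff: forall l m, (m0 <= m)%N -> (n - m)%N = l -> forall H, determined_by H m ->
  \sum_(o : FT) H o * \prod_(j : 'I_n | (m <= j)%N) K j o =
  \sum_(o : FT) H o * \prod_(j : 'I_n | (m <= j)%N) (o j == t0)%:R.
  by move=> /(_ _ m0 (leqnn _) erefl).
elim=> [|l IH] m m0m nm H hH.
  apply: eq_bigr => o _; rewrite !big_pred0 // => j;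
  by apply: negbTE; rewrite -ltnNge; apply: leq_trans (ltn_ord j) _; lia.
have mn : (m < n)%N by lia.
set j0 := Ordinal mn.
under eq_bigr do rewrite (prod_from_split mn) mulrA.
under [RHS]eq_bigr do rewrite (prod_from_split mn) mulrCA mulrC.
rewrite (IH m.+1); [|lia|lia|]; last first.
  move=> o o' e; congr (_ * _); first by apply: hH => k km; apply: e; lia.
  by apply: (hD j0) => //= k km; apply: e.
under [LHS]eq_bigr do rewrite mulrAC.
apply: (sum_kernel_at (K := K j0)); last exact: hK.
move=> o t; congr (_ * _); first by apply: hH; apply: upd_below.
by apply: eq_bigr => j mj; rewrite upd_other // -val_eqE /= neq_ltn mj orbT.
Qed.

End CoordinateUpdate.

Lemma sum_triple (R : nmodType) (A B C : finType) (f : A * B * C -> R) :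
  \sum_t f t = \sum_(a : A) \sum_(b : B) \sum_(c : C) f (a, b, c).
Proof.
rewrite [RHS]pair_bigA /= [RHS]pair_bigA /=.
by apply: eq_bigr => [[[a b] c]] _.
Qed.

Lemma exchange_big3 (R : nmodType) (A B C : finType) (F : A -> B -> C -> R) :
  \sum_a \sum_b \sum_c F a b c = \sum_b \sum_c \sum_a F a b c.
Proof. by rewrite exchange_big; apply: eq_bigr => b _; exact: exchange_big. Qed.

Lemma prod_neq_split (R : comPzRingType) n (F : 'I_n -> R) i :
  \prod_(j < n | j != i) F j =
  \prod_(j < n | (j < i)%N) F j * \prod_(j < n | (i < j)%N) F j.
Proof.
rewrite (bigID (fun j : 'I_n => (j < i)%N)) /=; congr (_ * _); apply: eq_bigl => j;
by rewrite -val_eqE /=; case: ltngtP.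
Qed.

Section Channel.
Variables (R : realFieldType) (X1 X2 Z1 Z2 Y S1 S2 Sh : finType) (n M1 M2 : nat).
Variable PS : S1 * S2 -> R.
Variable W : X1 -> X2 -> S1 * S2 -> Y * Z1 * Z2 -> R.
Variables (enc1 : encoder n M1 Z1 X1) (enc2 : encoder n M2 Z2 X2).
Hypothesis hPS0 : forall s, 0 <= PS s.
Hypothesis hPS1 : \sum_s PS s = 1.
Hypothesis hW0 : forall x1 x2 s o, 0 <= W x1 x2 s o.
Hypothesis hW1 : forall x1 x2 s, \sum_o W x1 x2 s o = 1.
(* A distortion measure on the whole state; d_1, d_2 compose it with .1, .2. *)
Variable d : S1 * S2 -> Sh -> R.

Local Notation T := (Y * Z1 * Z2)%type.
Local Notation OT := {ffun 'I_n -> T}.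
Local Notation ST := {ffun 'I_n -> S1 * S2}.
Implicit Types (o : OT) (i j k : 'I_n).

Lemma x1seq_causal w1 j o o' : (forall k, (k < j)%N -> o k = o' k) ->
  x1seq enc1 w1 o j = x1seq enc1 w1 o' j.
Proof.
move=> e; rewrite /x1seq /inputs !ffunE; congr (@enc1 j w1 _).
by apply/ffunP => k; rewrite !ffunE /= e //; exact: (@ltn_ord j k).
Qed.

Lemma x2seq_causal w2 j o o' : (forall k, (k < j)%N -> o k = o' k) ->
  x2seq enc2 w2 o j = x2seq enc2 w2 o' j.
Proof.
move=> e; rewrite /x2seq /inputs !ffunE; congr (@enc2 j w2 _).
by apply/ffunP => k; rewrite !ffunE /= e //; exact: (@ltn_ord j k).
Qed.

Lemma x1seq_upd w1 o i t j : (j <= i)%N -> x1seq enc1 w1 (upd o i t) j = x1seq enc1 w1 o j.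
Proof. by move=> ji; apply: x1seq_causal; apply: upd_below. Qed.

Lemma x2seq_upd w2 o i t j : (j <= i)%N -> x2seq enc2 w2 (upd o i t) j = x2seq enc2 w2 o j.
Proof. by move=> ji; apply: x2seq_causal; apply: upd_below. Qed.

Lemma zseq_upd_y o i y y' (z1 : Z1) (z2 : Z2) :
  z1seq (upd o i (y, z1, z2)) = z1seq (upd o i (y', z1, z2)) /\
  z2seq (upd o i (y, z1, z2)) = z2seq (upd o i (y', z1, z2)).
Proof. by split; apply/ffunP => k; rewrite !ffunE; case: (k == i). Qed.

Definition kernel w1 w2 j o : R :=
  \sum_s PS s * W (x1seq enc1 w1 o j) (x2seq enc2 w2 o j) s (o j).

Lemma kernel_ge0 w1 w2 j o : 0 <= kernel w1 w2 j o.
Proof. by apply: sumr_ge0 => s _; apply: mulr_ge0. Qed.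

Lemma kernel_is_kernel w1 w2 j : is_kernel_at (kernel w1 w2 j) j.
Proof.
move=> o; rewrite /kernel exchange_big /= -[RHS]hPS1; apply: eq_bigr => s _.
under eq_bigr do rewrite x1seq_upd // x2seq_upd // upd_same.
by rewrite -mulr_sumr hW1 mulr1.
Qed.

Lemma kernel_causal w1 w2 j : determined_by (kernel w1 w2 j) j.+1.
Proof.
move=> o o' e; have e' k : (k < j)%N -> o k = o' k by move=> kj; apply: e; exact: ltnW.
by rewrite /kernel (x1seq_causal _ e') (x2seq_causal _ e') e.
Qed.

Lemma kernel_upd_y w1 w2 i j o y y' z1 z2 : j != i ->
  kernel w1 w2 j (upd o i (y, z1, z2)) = kernel w1 w2 j (upd o i (y', z1, z2)).
Proof.
move=> ji; have [e1 e2] := zseq_upd_y o i y y' z1 z2.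
by rewrite /kernel /x1seq /x2seq e1 e2 !upd_other.
Qed.

Definition msg_joint w1 w2 (s : ST) o : R :=
  \prod_(j < n) (PS (s j) * W (x1seq enc1 w1 o j) (x2seq enc2 w2 o j) (s j) (o j)).

(* Minimal expected distortion of estimating S from (x1, x2, z1, z2),
   jointly with the probability of (z1, z2); c_k sums it over (z1, z2). *)
Definition loc_cost x1 x2 z1 z2 : R :=
  fmin (fun sh : Sh => \sum_(s : S1 * S2) PS s * chZ W x1 x2 s z1 z2 * d s sh).
Definition cost x1 x2 : R := \sum_(z1 : Z1) \sum_(z2 : Z2) loc_cost x1 x2 z1 z2.

(* Summing out the states: only S_i interacts with the distortion at time i. *)
Lemma sum_states_distortion w1 w2 i e o :
  \sum_(s : ST) msg_joint w1 w2 s o * d (s i) e =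
  \prod_(j < n | j != i) kernel w1 w2 j o *
  \sum_s PS s * W (x1seq enc1 w1 o i) (x2seq enc2 w2 o i) s (o i) * d s e.
Proof.
pose F j s := PS s * W (x1seq enc1 w1 o j) (x2seq enc2 w2 o j) s (o j) *
  (if j == i then d s e else 1).
transitivity (\prod_(j < n) \sum_s F j s).
  rewrite bigA_distr_bigA; apply: eq_bigr => s _; rewrite /F big_split /=.
  congr (_ * _); rewrite (bigD1 i) //= eqxx [X in _ * X]big1 ?mulr1 //.
  by move=> j /negPf ->.
rewrite (bigD1 i) //= mulrC; congr (_ * _).
  by apply: eq_bigr => j /negPf ji; apply: eq_bigr => s _; rewrite /F ji mulr1.
by apply: eq_bigr => s _; rewrite /F eqxx.
Qed.

Lemma sum_states_const w1 w2 (c : R) o :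
  \sum_(s : ST) msg_joint w1 w2 s o * c = \prod_(j < n) kernel w1 w2 j o * c.
Proof. by rewrite -mulr_suml /kernel bigA_distr_bigA. Qed.

Section FixedTime.
Variables (w1 : 'I_M1) (w2 : 'I_M2) (i : 'I_n) (t0 : T).
Local Notation K := (kernel w1 w2).
Local Notation x1i o := (x1seq enc1 w1 o i).
Local Notation x2i o := (x2seq enc2 w2 o i).

Definition past o := \prod_(j < n | (j < i)%N) K j o.
Definition future o := \prod_(j < n | (i < j)%N) K j o.
Definition frozen o : R := \prod_(j < n | (i < j)%N) (o j == t0)%:R.

Lemma past_upd o t : past (upd o i t) = past o.
Proof. by apply: eq_bigr => j ji; apply: kernel_causal; apply: upd_below. Qed.

Lemma past_causal : determined_by past i.+1.
Proof.
move=> o o' e; apply: eq_bigr => j ji; apply: kernel_causal => k kj; apply: e.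
by apply: leq_trans kj _; apply: ltnW.
Qed.

Lemma frozen_upd o t : frozen (upd o i t) = frozen o.
Proof. by apply: eq_bigr => j ij; rewrite upd_other // -val_eqE /= neq_ltn ij orbT. Qed.

Lemma cost_frozen :
  \sum_(o : OT) \prod_(j < n) K j o * cost (x1i o) (x2i o) =
  \sum_(o : OT) (o i == t0)%:R * past o * frozen o * cost (x1i o) (x2i o).
Proof.
have inputs_causal : determined_by (fun o => cost (x1i o) (x2i o)) i.+1.
  move=> o o' e; have e' k : (k < i)%N -> o k = o' k by move=> ki; apply: e; exact: ltnW.
  by rewrite /= (x1seq_causal _ e') (x2seq_causal _ e').
transitivity (\sum_(o : OT) (past o * cost (x1i o) (x2i o) * K i o) *
    \prod_(j < n | (i.+1 <= j)%N) K j o).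
  by apply: eq_bigr => o _; rewrite (bigD1 i) //= prod_neq_split /past; ring.
rewrite (freeze_future (m0 := i.+1) (K := K) t0) //; first last.
- move=> o o' e; rewrite (past_causal e) (inputs_causal o o' e).
  by rewrite (kernel_causal w1 w2 e).
- by move=> j _; apply: kernel_causal.
- by move=> j _; apply: kernel_is_kernel.
transitivity (\sum_(o : OT) (past o * cost (x1i o) (x2i o) * frozen o) * K i o).
  by apply: eq_bigr => o _; rewrite /frozen; ring.
rewrite (sum_kernel_at (j := i) t0); last exact: kernel_is_kernel.
  by apply: eq_bigr => o _; ring.
by move=> o t; rewrite past_upd frozen_upd x1seq_upd // x2seq_upd.
Qed.

(* Lower bound on the distortion at time i of any estimator that sees the
   feedback sequences: per value of (z1_i, z2_i), the estimator cannot beat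
   the minimal conditional distortion. *)
Lemma distortion_lower_bound (est : {ffun 'I_n -> Z1} -> {ffun 'I_n -> Z2} -> Sh) :
  \sum_(o : OT) (o i == t0)%:R * \sum_(z1 : Z1) \sum_(z2 : Z2)
     \prod_(j < n | j != i) K j (upd o i (t0.1.1, z1, z2)) * loc_cost (x1i o) (x2i o) z1 z2
  <= \sum_(o : OT) \prod_(j < n | j != i) K j o *
     \sum_s PS s * W (x1i o) (x2i o) s (o i) * d s (est (z1seq o) (z2seq o)).
Proof.
rewrite [X in _ <= X](sum_by_coord _ i t0).
apply: ler_sum => o _; apply: ler_wpM2l; first exact: ler0n.
rewrite sum_triple [X in _ <= X]exchange_big3.
apply: ler_sum => z1 _; apply: ler_sum => z2 _.
under [X in _ <= X]eq_bigr => y _.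
  rewrite (eq_bigr _ (fun j ji => @kernel_upd_y w1 w2 i j o y t0.1.1 z1 z2 ji)).
  have [-> ->] := zseq_upd_y o i y t0.1.1 z1 z2.
  rewrite x1seq_upd // x2seq_upd // upd_same.
over.
rewrite -mulr_sumr; apply: ler_wpM2l.
  by apply: prodr_ge0 => j _; apply: kernel_ge0.
rewrite exchange_big /=.
under eq_bigr do rewrite -mulr_suml -mulr_sumr.
exact: fmin_le.
Qed.

(* The lower bound equals the expected idealized cost: freeze the future on
   both sides. *)
Lemma lower_bound_is_cost :
  \sum_(o : OT) (o i == t0)%:R * \sum_(z1 : Z1) \sum_(z2 : Z2)
     \prod_(j < n | j != i) K j (upd o i (t0.1.1, z1, z2)) * loc_cost (x1i o) (x2i o) z1 z2
  = \sum_(o : OT) \prod_(j < n) K j o * cost (x1i o) (x2i o).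
Proof.
pose Hz o z1 z2 := (o i == t0)%:R * past o * loc_cost (x1i o) (x2i o) z1 z2.
have Hz_causal z1 z2 : determined_by (fun o => Hz o z1 z2) i.+1.
  move=> o o' e; have e' k : (k < i)%N -> o k = o' k by move=> ki; apply: e; exact: ltnW.
  by rewrite /Hz (past_causal e) (e i) // (x1seq_causal _ e') (x2seq_causal _ e').
transitivity (\sum_(o : OT) \sum_(z1 : Z1) \sum_(z2 : Z2)
    Hz o z1 z2 * future (upd o i (t0.1.1, z1, z2))).
  apply: eq_bigr => o _; rewrite mulr_sumr; apply: eq_bigr => z1 _.
  rewrite mulr_sumr; apply: eq_bigr => z2 _.
  have past_t := past_upd o (t0.1.1, z1, z2); rewrite /past in past_t.
  by rewrite prod_neq_split past_t /Hz /future /past; ring.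
rewrite cost_frozen exchange_big3.
under eq_bigr => z1 _.
  under eq_bigr => z2 _.
    rewrite (freeze_future (m0 := i.+1)
      (K := fun j o => K j (upd o i (t0.1.1, z1, z2))) t0 _ _ (Hz_causal z1 z2)).
    - over.
    - move=> j ij o /=; have ji : i != j by rewrite -val_eqE /= neq_ltn ij.
      under eq_bigr do rewrite upd_comm //.
      exact: kernel_is_kernel.
    - move=> j _ o o' e /=; apply: kernel_causal => k kj.
      by rewrite !ffunE e.
  over.
rewrite -exchange_big3; apply: eq_bigr => o _.
rewrite /cost mulr_sumr; apply: eq_bigr => z1 _; rewrite mulr_sumr.
by apply: eq_bigr => z2 _; rewrite /Hz /frozen; ring.
Qed.

End FixedTime.

Lemma cost_le_distortion_msg w1 w2 i (est : {ffun 'I_n -> Z1} -> {ffun 'I_n -> Z2} -> Sh) :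
  \sum_(s : ST) \sum_(o : OT) msg_joint w1 w2 s o * cost (x1seq enc1 w1 o i) (x2seq enc2 w2 o i)
  <= \sum_(s : ST) \sum_(o : OT) msg_joint w1 w2 s o * d (s i) (est (z1seq o) (z2seq o)).
Proof.
rewrite exchange_big [X in _ <= X]exchange_big /=.
under eq_bigr do rewrite sum_states_const.
under [X in _ <= X]eq_bigr do rewrite sum_states_distortion.
case: (pickP (fun _ : T => true)) => [t0 _|T0]; last first.
  by rewrite !big1 // => o _; move: (T0 (o i)).
rewrite -(lower_bound_is_cost w1 w2 i t0).
exact: distortion_lower_bound.
Qed.

Lemma cost_le_distortion i (est : 'I_M1 -> 'I_M2 -> {ffun 'I_n -> Z1} -> {ffun 'I_n -> Z2} -> Sh) :
  expect PS W enc1 enc2 (fun w1 w2 s o => cost (x1seq enc1 w1 o i) (x2seq enc2 w2 o i))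
  <= expect PS W enc1 enc2 (fun w1 w2 s o => d (s i) (est w1 w2 (z1seq o) (z2seq o))).
Proof.
rewrite /expect; apply: ler_sum => w1 _; apply: ler_sum => w2 _.
have normalize (g : ST -> OT -> R) :
  \sum_(s : ST) \sum_(o : OT) joint PS W enc1 enc2 w1 w2 s o * g s o =
  (M1 * M2)%:R^-1 * \sum_(s : ST) \sum_(o : OT) msg_joint w1 w2 s o * g s o.
  rewrite mulr_sumr; apply: eq_bigr => s _; rewrite mulr_sumr.
  by apply: eq_bigr => o _; rewrite /joint -mulrA.
rewrite !normalize; apply: ler_wpM2l; first by rewrite invr_ge0 ler0n.
exact: cost_le_distortion_msg.
Qed.

End Channel.

Lemma expect_scaled_sum (R : realFieldType) (X1 X2 Z1 Z2 Y S1 S2 : finType) (n M1 M2 : nat)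
  (PS : S1 * S2 -> R) (W : X1 -> X2 -> S1 * S2 -> Y * Z1 * Z2 -> R)
  (enc1 : encoder n M1 Z1 X1) (enc2 : encoder n M2 Z2 X2) (c : R)
  (f : 'I_n -> 'I_M1 -> 'I_M2 -> {ffun 'I_n -> S1 * S2} -> {ffun 'I_n -> Y * Z1 * Z2} -> R) :
  expect PS W enc1 enc2 (fun w1 w2 s o => c * \sum_(i < n) f i w1 w2 s o) =
  c * \sum_(i < n) expect PS W enc1 enc2 (f i).
Proof.
transitivity (c * expect PS W enc1 enc2 (fun w1 w2 s o => \sum_(i < n) f i w1 w2 s o)).
  rewrite /expect mulr_sumr; apply: eq_bigr => w1 _; rewrite mulr_sumr.
  apply: eq_bigr => w2 _; rewrite mulr_sumr; apply: eq_bigr => s _; rewrite mulr_sumr.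
  by apply: eq_bigr => o _; rewrite mulrCA.
congr (_ * _); rewrite /expect.
rewrite [RHS]exchange_big; apply: eq_bigr => w1 _.
rewrite [RHS]exchange_big; apply: eq_bigr => w2 _.
rewrite [RHS]exchange_big; apply: eq_bigr => s _.
rewrite [RHS]exchange_big; apply: eq_bigr => o _.
by rewrite mulr_sumr.
Qed.

Theorem mainTheorem5 (R : realFieldType)
  (X1 X2 Z1 Z2 Y S1 S2 Sh1 Sh2 : finType) (n M1 M2 : nat)
  (PS : S1 * S2 -> R) (W : X1 -> X2 -> S1 * S2 -> Y * Z1 * Z2 -> R)
  (d1 : S1 -> Sh1 -> R) (d2 : S2 -> Sh2 -> R)
  (enc1 : encoder n M1 Z1 X1) (enc2 : encoder n M2 Z2 X2)
  (psi1 : {ffun 'I_n -> X1} -> {ffun 'I_n -> Z1} -> {ffun 'I_n -> Sh1})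
  (psi2 : {ffun 'I_n -> X2} -> {ffun 'I_n -> Z2} -> {ffun 'I_n -> Sh2})
  (hM1 : (0 < M1)%N) (hM2 : (0 < M2)%N)
  (hPS0 : forall s, 0 <= PS s) (hPS1 : \sum_s PS s = 1)
  (hW0 : forall x1 x2 s o, 0 <= W x1 x2 s o)
  (hW1 : forall x1 x2 s, \sum_o W x1 x2 s o = 1)
  (hd1 : forall s sh, 0 <= d1 s sh) (hd2 : forall s sh, 0 <= d2 s sh) :
  expect PS W enc1 enc2
    (fun w1 w2 s o => n%:R^-1 * \sum_(i < n)
        d1 (s i).1 (psi1 (x1seq enc1 w1 o) (z1seq o) i))
  >= n%:R^-1 * \sum_(i < n)
       expect PS W enc1 enc2
         (fun w1 w2 s o => cost1 PS W d1 (x1seq enc1 w1 o i) (x2seq enc2 w2 o i))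
  /\
  expect PS W enc1 enc2
    (fun w1 w2 s o => n%:R^-1 * \sum_(i < n)
        d2 (s i).2 (psi2 (x2seq enc2 w2 o) (z2seq o) i))
  >= n%:R^-1 * \sum_(i < n)
       expect PS W enc1 enc2
         (fun w1 w2 s o => cost2 PS W d2 (x1seq enc1 w1 o i) (x2seq enc2 w2 o i)).
Proof.
(* Each estimator psi_k, at time i, is a function of the messages and the
   feedback sequences, so [cost_le_distortion] applies term by term. *)
split; rewrite expect_scaled_sum; apply: ler_wpM2l; rewrite ?invr_ge0 ?ler0n //;
  apply: ler_sum => i _.
- exact: (@cost_le_distortion _ _ _ _ _ _ _ _ _ _ _ _ _ _ _ _ hPS0 hPS1 hW0 hW1 (fun s sh => d1 s.1 sh) i
            (fun w1 w2 z1 z2 => psi1 (inputs enc1 w1 z1) z1 i)).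
- exact: (@cost_le_distortion _ _ _ _ _ _ _ _ _ _ _ _ _ _ _ _ hPS0 hPS1 hW0 hW1 (fun s sh => d2 s.2 sh) i
            (fun w1 w2 z1 z2 => psi2 (inputs enc2 w2 z2) z2 i)).
Qed.
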